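(* Let $m,k$ be positive integers with $m\ge4$ and $m>k+2$. For $z\in\mathbb{F}_{2^k}$ define $f^{(z)}:\mathbb{F}_{2^m}\times\mathbb{F}_{2^m}\to\mathbb{F}_2$ by $f^{(z)}(x_1,x_2)={\rm Tr}_1^m(x_1x_2^{2^m-2})$ if ${\rm Tr}_1^k(z)=0$ and $f^{(z)}(x_1,x_2)={\rm Tr}_1^m(x_2x_1^{2^m-2})$ if ${\rm Tr}_1^k(z)=1$. Then $f:\mathbb{F}_{2^m}\times\mathbb{F}_{2^m}\times\mathbb{F}_{2^k}\times\mathbb{F}_{2^k}\to\mathbb{F}_2$, $f(x_1,x_2,y,z)=f^{(z)}(x_1,x_2)+{\rm Tr}_1^k(yz)$, is a GMM function which is not in the class $MM^{\#}$.
   Context: ${\rm Tr}_a^b$ denotes the trace from $\mathbb{F}_{2^b}$ to $\mathbb{F}_{2^a}$. A GMM (generalized Maiorana–McFarland) function is one of the form $f(x,y,z)=f^{(z)}(x)+{\rm Tr}_1^k(yz)$ on $W\times\mathbb{F}_{2^k}\times\mathbb{F}_{2^k}$ with every $f^{(z)}$ bent on $W$. Two Boolean functions $f,g$ on an $\mathbb{F}_2$-space $X$ are EA-equivalent if $g(x)=f(L(x)+a)+\langle c,x\rangle+b$ with $L$ a linear permutation of $X$, $a,c\in X$, $b\in\mathbb{F}_2$. The Maiorana–McFarland class on $\mathbb{F}_{2^N}\times\mathbb{F}_{2^N}$ consists of functions ${\rm Tr}_1^N(x\pi(y))+g(y)$ with $\pi$ a permutation of $\mathbb{F}_{2^N}$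 and $g$ arbitrary; $MM^{\#}$ is the set of Boolean functions on a $2N$-dimensional $\mathbb{F}_2$-space EA-equivalent (after a linear identification with $\mathbb{F}_{2^N}^2$) to such a function. *)

From HB Require Import structures.
From mathcomp Require Import all_boot all_order all_algebra all_fingroup all_field.
Set Implicit Arguments. Unset Strict Implicit. Unset Printing Implicit Defensive.
Import GRing.Theory.
Local Open Scope ring_scope.

Definition tr (F : finFieldType) (n : nat) (x : F) : F := \sum_(i < n) x ^+ (2 ^ i).

(* Tr_1^n as a Boolean (F_2-valued) function: true <-> Tr = 1 (Tr takes values in {0,1}). *)
Definition trb (F : finFieldType) (n : nat) (x : F) : bool := tr n x == 1.

Definition walsh (F : finFieldType) (m : nat) (h : F * F -> bool) (a : F * F) : int :=
  \sum_(x : F * F) (-1) ^+ (h x (+) trb m (a.1 * x.1 + a.2 * x.2)).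

Definition bent (F : finFieldType) (m : nat) (h : F * F -> bool) : Prop :=
  forall a : F * F, (walsh m h a) ^+ 2 = (#|F| ^ 2)%:Z.

Definition isGMM (F K : finFieldType) (m k : nat) (f : F * F * K * K -> bool) : Prop :=
  exists g : K -> (F * F -> bool),
    (forall z, bent m (g z)) /\
    (forall x y z, f (x, y, z) = g z x (+) trb k (y * z)).

(* F_2-linear maps between F_2-spaces (char 2 zmodTypes): additive maps. *)
Definition F2linear (U V : zmodType) (L : U -> V) : Prop :=
  forall u v, L (u + v) = L u + L v.

Definition F2functional (U : zmodType) (l : U -> bool) : Prop :=
  forall u v, l (u + v) = l u (+) l v.

Definition mmfun (L : finFieldType) (N : nat) (pi : {perm L}) (g : L -> bool)
  (w : L * L) : bool := trb N (w.1 * pi w.2) (+) g w.2.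

(* MM^#: f on the F_2-space V of dimension 2N is EA-equivalent, after a linear
   identification V ~ F_{2^N}^2, to a Maiorana-McFarland function. *)
Definition MMsharp (V : zmodType) (N : nat) (f : V -> bool) : Prop :=
  exists (L : finFieldType), #|L| = (2 ^ N)%N /\
  exists (Lam : V -> L * L) (a : V) (l : V -> bool) (b : bool)
         (pi : {perm L}) (g : L -> bool),
    F2linear Lam /\ bijective Lam /\ F2functional l /\
    forall v, f v = mmfun N pi g (Lam (v + a)) (+) l v (+) b.

Definition fz (F K : finFieldType) (m k : nat) (z : K) (x : F * F) : bool :=
  if trb k z then trb m (x.2 * x.1 ^+ (2 ^ m - 2))
  else trb m (x.1 * x.2 ^+ (2 ^ m - 2)).

Definition fcor (F K : finFieldType) (m k : nat) (v : F * F * K * K) : bool :=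
  let: (x, y, z) := v in fz (F := F) m k z x (+) trb k (y * z).

From HB Require Import structures.
From mathcomp Require Import all_boot all_order all_algebra all_fingroup all_field.
From mathcomp Require Import ring zify.
Set Implicit Arguments. Unset Strict Implicit. Unset Printing Implicit Defensive.
Import GRing.Theory Num.Theory.
Local Open Scope ring_scope.

(* Since x^(2^m-2) = x^-1, each f^(z) is Tr(x1/x2) up to swapping x1 and x2, and the Walsh
   transform of Tr(x1/x2) at (a1,a2) is +-2^m; so f is GMM.  If f were in MM#, there would be
   an additive injection of F_(2^(m+k)) into the domain along whose image all second
   derivatives D_a D_c f vanish.  For directions a, c with zero z-coordinate, D_a D_c f is
   D_a D_c f^(z); taking Tr(z) = 0, resp. Tr(z) = 1, this forces the second difference of
   t |-> t^-1 at the second, resp. first, x-coordinates of a and c to vanish, which in a field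
   with more than 4 elements happens only if one of them is 0 or they are equal.  Hence on the
   kernel of the z-projection both x-coordinates take at most two values, the kernel has at
   most 4 * 2^k elements, the image at most 2^(2k+2), and m + k <= 2k + 2 contradicts m > k + 2. *)

Section Trace.
Variables (F : finFieldType) (n : nat).
Hypothesis cardF : #|F| = (2 ^ n)%N.

Lemma pchar2F : (2 \in [pchar F])%N.
Proof. exact: card_finPcharP cardF _. Qed.

Lemma frobD i (x y : F) : (x + y) ^+ (2 ^ i) = x ^+ (2 ^ i) + y ^+ (2 ^ i).
Proof. by rewrite exprDn_pchar // pnatX (pnatE _ (isT : prime 2)) pchar2F. Qed.

Lemma trD (x y : F) : tr n (x + y) = tr n x + tr n y.
Proof. by rewrite /tr -big_split; apply: eq_bigr => i _; rewrite frobD. Qed.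

Lemma tr_sqr (x : F) : tr n x ^+ 2 = tr n x.
Proof.
have sqrD : {morph (fun t : F => t ^+ 2) : a b / a + b >-> a + b}.
  by move=> a b; rewrite -[2%N]/(2 ^ 1)%N frobD.
rewrite /tr (big_morph _ sqrD (expr0n _ 2)).
under eq_bigr => i _ do rewrite -exprM -expnSr.
case: n cardF => [|n'] cardF'; first by rewrite !big_ord0.
rewrite big_ord_recr big_ord_recl /= -cardF' expf_card expn0 expr1 addrC.
by congr (_ + _); apply: eq_bigr => i _; rewrite expnS.
Qed.

Lemma tr_eq01 (x : F) : tr n x = 0 \/ tr n x = 1.
Proof.
have : tr n x * (tr n x - 1) == 0 by rewrite mulrBr mulr1 -expr2 tr_sqr subrr.
by rewrite mulf_eq0 subr_eq0 => /orP[] /eqP; [left | right].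
Qed.

Lemma trbD (x y : F) : trb n (x + y) = trb n x (+) trb n y.
Proof.
rewrite /trb trD; case: (tr_eq01 x) => ->; case: (tr_eq01 y) => ->;
by rewrite ?addr0 ?add0r ?(addrr_pchar2 pchar2F) ?eqxx //= ?(eq_sym 0) ?oner_eq0.
Qed.

Lemma trb0 : trb n (0 : F) = false.
Proof. by have := trbD 0 0; rewrite addr0 addbb. Qed.

(* Tr is a polynomial of degree 2^(n-1) < #|F|, so it has a non-root, where it equals 1. *)
Lemma exists_trb1 : (0 < n)%N -> exists x : F, trb n x.
Proof.
move=> n_gt0; pose P : {poly F} := \sum_(i < n) 'X^(2 ^ i).
have PE x : P.[x] = tr n x.
  by rewrite horner_sum; apply: eq_bigr => i _; rewrite hornerXn.
have sizeP : size P = (2 ^ n.-1).+1.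
  rewrite /P; case: (n) n_gt0 => // n' _.
  rewrite big_ord_recr /= addrC size_polyDl size_polyXn //.
  rewrite ltnS; apply: leq_trans (size_sum _ _ _) _.
  by apply/bigmax_leqP => i _; rewrite size_polyXn ltn_exp2l.
apply/existsP; apply: contraT; rewrite negb_exists => /forallP trb0F.
have P_neq0 : P != 0 by rewrite -size_poly_gt0 sizeP.
have rootsP : all (root P) (enum F).
  apply/allP => x _; rewrite /root PE.
  by move: (trb0F x); rewrite /trb; case: (tr_eq01 x) => ->; rewrite ?eqxx.
have := max_poly_roots P_neq0 rootsP (enum_uniq F).
rewrite sizeP -cardE cardF -{1}(prednK n_gt0) expnS ltnS leqNgt.
by rewrite ltn_Pmull // expn_gt0.
Qed.

Lemma expr_card_sub2 (x : F) : (1 < n)%N -> x ^+ (2 ^ n - 2) = x^-1.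
Proof.
move=> n_gt1; have two_lt : (2 < 2 ^ n)%N by rewrite -{1}(expn1 2) ltn_exp2l.
have [->|x_neq0] := eqVneq x 0; first by rewrite invr0 expr0n subn_eq0 leqNgt two_lt.
apply: (mulIf x_neq0); apply: (mulIf x_neq0); rewrite mulVf // mul1r.
by rewrite -!exprSr -[(_ - 2).+2]addn2 (subnK (ltnW two_lt)) -cardF expf_card.
Qed.

End Trace.

Section Walsh.
Variables (F : finFieldType) (n : nat).
Hypotheses (cardF : #|F| = (2 ^ n)%N) (n_gt0 : (0 < n)%N).

Lemma sum_sign_trb (c : F) :
  \sum_(x : F) (-1) ^+ trb n (x * c) = (if c == 0%R then #|F|%:Z else 0) :> int.
Proof.
have [->|c_neq0] := eqVneq c 0.
  under eq_bigr => x _ do rewrite mulr0 (trb0 cardF) expr0.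
  by rewrite sumr_const natz.
have [x0 trx0] := exists_trb1 cardF n_gt0.
set S := (X in X = _).
(* Translating x by x0 / c, where Tr(x0) = 1, flips every sign. *)
suff : S = - S by move/eqP; rewrite -addr_eq0 -mulr2n mulrn_eq0 => /eqP.
rewrite {1}/S (reindex_inj (addIr (x0 / c))) /= -sumrN.
apply: eq_bigr => x _.
by rewrite mulrDl divfK // (trbD cardF) trx0 signr_addb expr1 mulrN1.
Qed.

Definition trdiv (x : F * F) : bool := trb n (x.1 / x.2).

Lemma walsh_trdiv (a : F * F) :
  walsh n trdiv a = (-1) ^+ trb n (a.2 / a.1) * #|F|%:Z.
Proof.
rewrite /walsh /trdiv.
rewrite -(pair_bigA _ (fun x1 x2 => (-1) ^+ (trb n (x1 / x2) (+) trb n (a.1 * x1 + a.2 * x2)))).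
rewrite exchange_big /=.
have split_x1 x1 x2 : trb n (x1 / x2) (+) trb n (a.1 * x1 + a.2 * x2)
   = trb n (x1 * (x2^-1 + a.1)) (+) trb n (a.2 * x2).
  by rewrite (trbD cardF) addbA -(trbD cardF) [a.1 * x1]mulrC -mulrDr.
under eq_bigr => x2 _ do under eq_bigr => x1 _ do rewrite split_x1 signr_addb.
under eq_bigr => x2 _ do rewrite -big_distrl /= sum_sign_trb.
rewrite (bigD1 a.1^-1) //= invrK (addrr_pchar2 (pchar2F cardF)) eqxx big1 ?addr0.
  by rewrite mulrC.
move=> x2 x2_neq; rewrite addr_eq0 (oppr_pchar2 (pchar2F cardF)).
by case: eqP => [x2E|]; [move: x2_neq; rewrite -x2E invrK eqxx | rewrite mul0r].
Qed.

Lemma bent_trdiv : bent n trdiv.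
Proof.
move=> a; rewrite walsh_trdiv exprMn sqrr_sign mul1r.
by rewrite expr2 -PoszM mulnn.
Qed.

End Walsh.

Lemma bent_swap (F : finFieldType) (n : nat) (h : F * F -> bool) :
  bent n h -> bent n (fun x => h (x.2, x.1)).
Proof.
move=> bent_h [a1 a2]; rewrite -[RHS](bent_h (a2, a1)) /walsh.
rewrite (reindex_inj (h := fun x : F * F => (x.2, x.1))) /=; last by move=> [? ?] [? ?] [-> ->].
by congr (_ ^+ 2); apply: eq_bigr => -[x1 x2] _ /=; rewrite addrC.
Qed.

Lemma bent_fz (F K : finFieldType) (m k : nat) (z : K) :
  #|F| = (2 ^ m)%N -> (1 < m)%N -> bent m (fz (F := F) m k z).
Proof.
move=> cardF m_gt1.
have bent_m := bent_trdiv cardF (ltnW m_gt1).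
have fzE (x : F * F) : fz m k z x = if trb k z then trdiv m (x.2, x.1) else trdiv m x.
  by rewrite /fz /trdiv !(expr_card_sub2 cardF).
move=> a; rewrite /walsh; under eq_bigr => x _ do rewrite fzE.
by case: (trb k z); [apply: bent_swap | apply: bent_m].
Qed.

Definition D2 (V : zmodType) (h : V -> bool) (a c v : V) : bool :=
  h (v + a + c) (+) h (v + a) (+) h (v + c) (+) h v.

Lemma eq_D2 (V : zmodType) (h h' : V -> bool) :
  h =1 h' -> forall a c v, D2 h a c v = D2 h' a c v.
Proof. by move=> hE a c v; rewrite /D2 !hE. Qed.

Lemma D2_EA (V W : zmodType) (f : V -> bool) (h : W -> bool) (Lam : V -> W)
    (a0 : V) (l : V -> bool) (b : bool) :
  F2linear Lam -> F2functional l -> (forall v, f v = h (Lam (v + a0)) (+) l v (+) b) ->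
  forall a c v, D2 f a c v = D2 h (Lam a) (Lam c) (Lam (v + a0)).
Proof.
move=> Lam_lin l_lin fE a c v; rewrite /D2 !{}fE !l_lin.
rewrite -!(addrAC _ a0) !Lam_lin.
move: (h _) (h _) (h _) (h _) (l v) (l a) (l c) b.
by do 8!case.
Qed.

Lemma D2_mmfun (L : finFieldType) (N : nat) (pi : {perm L}) (g : L -> bool) :
  #|L| = (2 ^ N)%N -> forall al ga w, D2 (mmfun N pi g) (al, 0) (ga, 0) w = false.
Proof.
move=> cardL al ga [w1 w2]; rewrite /D2 /mmfun /= !addr0 !mulrDl !(trbD cardL).
move: (trb _ _) (trb _ _) (trb _ _) (g w2).
by do 4!case.
Qed.

Lemma F2linearB (U V : zmodType) (L : U -> V) :
  F2linear L -> forall u v, L (u - v) = L u - L v.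
Proof. by move=> L_lin u v; apply/eqP; rewrite eq_sym subr_eq -L_lin subrK. Qed.

Lemma MMsharp_flat (V : zmodType) (N : nat) (f : V -> bool) : MMsharp N f ->
  exists (L : finFieldType) (emb : L -> V),
    [/\ #|L| = (2 ^ N)%N, injective emb, (forall al ga, emb (al - ga) = emb al - emb ga)
      & forall al ga v, D2 f (emb al) (emb ga) v = false].
Proof.
move=> [L [cardL [Lam [a0 [l [b [pi [g [Lam_lin [[Li LamK LiK] [l_lin fE]]]]]]]]]]].
exists L, (fun al => Li (al, 0)); split => //.
- by apply: (can_inj (g := fun v => (Lam v).1)) => al; rewrite LiK.
- move=> al ga; apply: (can_inj LamK).
  by rewrite F2linearB // !LiK -[X in (_, X) = _](subrr (0 : L)).
- by move=> al ga v; rewrite (D2_EA Lam_lin l_lin fE) !LiK (D2_mmfun _ _ cardL).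
Qed.

Definition diff2 (V W : zmodType) (I : V -> W) (a c t : V) : W :=
  I (t + a + c) + I (t + a) + I (t + c) + I t.

Section SecondDifference.
Variables (F : finFieldType) (n : nat).
Hypothesis cardF : #|F| = (2 ^ n)%N.

Lemma D2_trmul_diff2 (I : F -> F) (a c : F * F) : (0 < n)%N ->
  (forall x, D2 (fun x => trb n (x.1 * I x.2)) a c x = false) ->
  forall t, diff2 I a.2 c.2 t = 0.
Proof.
move=> n_gt0 D2_0 t; apply/eqP; apply: contraT => diff2_neq0.
have D2_shift s : D2 (fun x => trb n (x.1 * I x.2)) a c (s, t)
    = trb n (s * diff2 I a.2 c.2 t) (+) D2 (fun x => trb n (x.1 * I x.2)) a c (0, t).
  rewrite /D2 /diff2 /= !add0r mul0r (trb0 cardF) !mulrDl !mulrDr !(trbD cardF).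
  move: (trb _ (s * _)) (trb _ (s * _)) (trb _ (s * _)) (trb _ (s * _)).
  move: (trb _ (a.1 * _)) (trb _ (c.1 * _)) (trb _ (a.1 * _)) (trb _ (c.1 * _)).
  by do 8!case.
have [x0 trx0] := exists_trb1 cardF n_gt0.
by have := D2_shift (x0 / diff2 I a.2 c.2 t); rewrite !D2_0 divfK // trx0.
Qed.

Lemma diff2_inv_eq0 (a c : F) : (4 < #|F|)%N ->
  (forall t, diff2 GRing.inv a c t = 0) -> [|| a == 0, c == 0 | a == c].
Proof.
move=> F_gt4 diff2_0; apply/negPn/negP; rewrite !negb_or => /and3P[a_neq0 c_neq0 ac_neq].
pose bad : seq F := [:: 0; a; c; a + c].
have [t t_notin] : exists t : F, t \notin bad.
  apply/existsP; apply: contraT; rewrite negb_exists => /forallP all_in.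
  have : (#|F| <= size bad)%N.
    apply: leq_trans (card_size _); apply/subset_leq_card/subsetP => x _.
    by rewrite -[_ \in _]negbK all_in.
  by rewrite leqNgt F_gt4.
have pchar2 := pchar2F cardF.
have addr_eq0F (x y : F) : (x + y == 0) = (x == y) by rewrite addr_eq0 (oppr_pchar2 pchar2).
move: t_notin; rewrite !inE !negb_or => /and4P[t_neq0 t_neq_a t_neq_c t_neq_ac].
have diff2E : diff2 GRing.inv a c t
    = a * c * (a + c) / (t * (t + a) * (t + c) * (t + a + c)).
  have diff2E_gen : (t + a + c)^-1 - (t + a)^-1 - (t + c)^-1 + t^-1
      = a * c * (t + t + a + c) / (t * (t + a) * (t + c) * (t + a + c)).
    by field; rewrite -addrA !addr_eq0F t_neq_ac t_neq_a t_neq_c t_neq0.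
  by move: diff2E_gen; rewrite !(oppr_pchar2 pchar2) (addrr_pchar2 pchar2) add0r.
move/eqP: (diff2_0 t); rewrite diff2E; apply/negP.
rewrite mulf_neq0 ?invr_eq0 ?mulf_neq0 //.
all: by rewrite -?addrA addr_eq0F.
Qed.

End SecondDifference.

Lemma card_le_kernel (L W : finZmodType) (p : L -> W) :
  (forall a b, p (a - b) = p a - p b) -> (#|L| <= #|W| * #|[set a | p a == 0%R]|)%N.
Proof.
move=> pB; pose r w := odflt 0 [pick a | p a == w].
have rP a : p (r (p a)) = p a.
  by rewrite /r; case: pickP => [b /eqP // | /(_ a)]; rewrite eqxx.
pose phi a := (p a, a - r (p a)).
have phi_inj : injective phi by move=> a b [pab]; rewrite /phi pab => /addIr.
have <- : #|phi @: [set: L]| = #|L| by rewrite card_imset ?cardsT.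
rewrite -[#|W|]cardsT -cardsX; apply/subset_leq_card/subsetP => _ /imsetP[a _ ->].
by rewrite !inE /= pB rP subrr eqxx.
Qed.

Section Fcor.
Variables (m k : nat) (F K : finFieldType).
Hypotheses (k_gt0 : (0 < k)%N) (m_ge4 : (4 <= m)%N).
Hypotheses (cardF : #|F| = (2 ^ m)%N) (cardK : #|K| = (2 ^ k)%N).
Local Notation V := (F * F * K * K)%type.

Lemma D2_fcor (a c : V) x y z : a.2 = 0 -> c.2 = 0 ->
  D2 (fcor m k) a c (x, y, z) = D2 (fz m k z) a.1.1 c.1.1 x.
Proof.
case: a c => [[a1 ay] az] [[c1 cy] cz] /= -> ->.
rewrite /D2 /fcor /= !addr0 !mulrDl !(trbD cardK).
move: (fz _ _ _ _) (fz _ _ _ _) (fz _ _ _ _) (fz _ _ _ _).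
move: (trb _ (y * z)) (trb _ (ay * z)) (trb _ (cy * z)).
by do 7!case.
Qed.

Lemma fcor_flat_coord (a c : V) : a.2 = 0 -> c.2 = 0 ->
  (forall v, D2 (fcor m k) a c v = false) ->
  [|| a.1.1.1 == 0, c.1.1.1 == 0 | a.1.1.1 == c.1.1.1]
  /\ [|| a.1.1.2 == 0, c.1.1.2 == 0 | a.1.1.2 == c.1.1.2].
Proof.
move=> az cz D2_0.
have m_gt1 : (1 < m)%N by apply: leq_trans m_ge4.
have F_gt4 : (4 < #|F|)%N by rewrite cardF (@leq_trans (2 ^ 3)) // leq_exp2l // (ltnW m_ge4).
have [z1 trz1] := exists_trb1 cardK k_gt0.
have fzE (z : K) (x : F * F) : fz m k z x = if trb k z then trdiv m (x.2, x.1) else trdiv m x.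
  by rewrite /fz /trdiv !(expr_card_sub2 cardF).
have D2_trdiv_diff2 (a' c' : F * F) :
    (forall x, D2 (trdiv m) a' c' x = false) -> [|| a'.2 == 0, c'.2 == 0 | a'.2 == c'.2].
  move=> D2_trdiv; apply: (diff2_inv_eq0 cardF F_gt4).
  exact: (D2_trmul_diff2 cardF (ltnW m_gt1) D2_trdiv).
split.
- apply: (D2_trdiv_diff2 (a.1.1.2, a.1.1.1) (c.1.1.2, c.1.1.1)) => -[s t].
  by have := D2_0 (t, s, 0, z1); rewrite D2_fcor // (eq_D2 (fzE z1)) trz1.
- apply: D2_trdiv_diff2 => x.
  by have := D2_0 (x, 0, 0); rewrite D2_fcor // (eq_D2 (fzE 0)) (trb0 cardK).
Qed.

Lemma fcor_flat_card (L : finZmodType) (emb : L -> V) :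
  injective emb -> (forall a b, emb (a - b) = emb a - emb b) ->
  (forall a b v, D2 (fcor m k) (emb a) (emb b) v = false) ->
  (#|L| <= #|K| * (#|K| * 4))%N.
Proof.
move=> emb_inj embB D2_0.
apply: leq_trans (card_le_kernel (p := fun a => (emb a).2) _) _.
  by move=> a b; rewrite embB.
rewrite leq_mul2l; apply/orP; right.
pose code a := ((emb a).1.2, (emb a).1.1.1 == 0, (emb a).1.1.2 == 0).
have coord_eq (s t : F) : (s == 0) = (t == 0) -> [|| s == 0, t == 0 | s == t] -> s = t.
  move=> st /or3P[/eqP s0 | /eqP t0 | /eqP //].
  - by move: st; rewrite s0 eqxx => /esym/eqP ->.
  - by move: st; rewrite t0 eqxx => /eqP.
have code_inj : {in [set a | (emb a).2 == 0] &, injective code}.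
  move=> a b; rewrite !inE => /eqP az /eqP bz [y_eq x1_eq x2_eq]; apply: emb_inj.
  have [dir1 dir2] := fcor_flat_coord az bz (D2_0 a b).
  move: (emb a) (emb b) az bz y_eq x1_eq x2_eq dir1 dir2.
  move=> [[[u1 u2] uy] uz] [[[v1 v2] vy] vz] /= -> -> -> e1 e2 d1 d2.
  by rewrite (coord_eq _ _ e1 d1) (coord_eq _ _ e2 d2).
rewrite -(card_in_imset code_inj) (leq_trans (subset_leq_card (subsetT _))) //.
by rewrite cardsT !card_prod card_bool -mulnA.
Qed.

End Fcor.

Theorem corollary3p10 (m k : nat) (F K : finFieldType) :
  (0 < k)%N -> (4 <= m)%N -> (k + 2 < m)%N ->
  #|F| = (2 ^ m)%N -> #|K| = (2 ^ k)%N ->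
  isGMM m k (@fcor F K m k) /\ ~ MMsharp (m + k) (@fcor F K m k).
Proof.
move=> k_gt0 m_ge4 km cardF cardK; split.
  exists (fun z => fz m k z); split => // z.
  by apply: bent_fz cardF _; apply: leq_trans m_ge4.
case/MMsharp_flat => L [emb [cardL emb_inj embB D2_0]].
have := fcor_flat_card k_gt0 m_ge4 cardF cardK emb_inj embB D2_0.
rewrite cardL cardK -[4%N]/(2 ^ 2)%N -!expnD leq_exp2l //.
by apply/negP; rewrite -ltnNge; lia.
Qed.
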